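(* Let $f:\mathbb{R}^n\to(-\infty,\infty]$, $g:\mathbb{R}^m\to(-\infty,\infty]$ be closed proper convex, $A\in\mathbb{R}^{m\times n}$, and let $\tau,\sigma>0$, $x^0\in\mathbb{R}^n$, $u^0\in\mathbb{R}^m$, $y^0\in\mathbb{R}^m$ be given with $u^0=Ax^0$. Algorithm CP-$xy\bar y$: set $\bar y^0=y^0$ and for $k\ge0$ compute $x^{k+1}=\mathrm{prox}^f_\tau(x^k-\tau A^\top\bar y^k)$, $y^{k+1}=\mathrm{prox}^{g^*}_\sigma(y^k+\sigma Ax^{k+1})$, $\bar y^{k+1}=2y^{k+1}-y^k$. Algorithm LADMP-$xuy$: for $k\ge0$ compute $x^{k+1}=\mathrm{prox}^f_\tau\big(x^k-\tau\nabla_x\mathcal{Q}^\sigma_P(x^k,u^k,y^k)\big)$, $u^{k+1}=\mathrm{prox}^g_{\sigma^{-1}}(\sigma^{-1}y^k+Ax^{k+1})$, $y^{k+1}=y^k-\sigma(u^{k+1}-Ax^{k+1})$. Then, started from the same $(x^0,y^0)$, both algorithms generate exactly the same sequence $\{(x^k,y^k)\}_{k\ge1}$.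
   Context: For a closed proper convex $h:\mathbb{R}^d\to(-\infty,\infty]$ and $\gamma>0$, $\mathrm{prox}^h_\gamma(x):=\arg\min_z\{h(z)+\frac{1}{2\gamma}\|z-x\|^2\}$. The conjugate is $h^*(x)=\sup_z\{\langle x,z\rangle-h(z)\}$. For $x\in\mathbb{R}^n$, $u,y\in\mathbb{R}^m$, $\mathcal{Q}^\sigma_P(x,u,y):=\frac{\sigma}{2}\|u-Ax-\sigma^{-1}y\|^2-\frac{1}{2\sigma}\|y\|^2$, so $\nabla_x\mathcal{Q}^\sigma_P(x,u,y)=-\sigma A^\top(u-Ax-\sigma^{-1}y)$. *)

From mathcomp Require Import ssreflect ssrfun ssrbool eqtype ssrnat seq fintype bigop.
From Stdlib Require Import Reals.
Set Implicit Arguments. Unset Strict Implicit. Unset Printing Implicit Defensive.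
Open Scope R_scope.

Definition vec (n : nat) := 'I_n -> R.
Definition mat (m n : nat) := 'I_m -> 'I_n -> R.

Definition vadd n (x y : vec n) : vec n := fun i => x i + y i.
Definition vsub n (x y : vec n) : vec n := fun i => x i - y i.
Definition vscale n (a : R) (x : vec n) : vec n := fun i => a * x i.
Definition inner n (x y : vec n) : R := \big[Rplus/0]_(i < n) (x i * y i).
Definition nsq n (x : vec n) : R := inner x x.
Definition mulv m n (A : mat m n) (x : vec n) : vec m :=
  fun i => \big[Rplus/0]_(j < n) (A i j * x j).
Definition mulTv m n (A : mat m n) (y : vec m) : vec n :=
  fun j => \big[Rplus/0]_(i < m) (A i j * y i).

Inductive ER := Fin (r : R) | PInf.

Definition le_ER (e : ER) (a : R) : Prop :=
  match e with Fin r => r <= a | PInf => False end.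

Definition proper n (h : vec n -> ER) : Prop := exists x, h x <> PInf.

(* convexity: the epigraph is convex *)
Definition convex n (h : vec n -> ER) : Prop :=
  forall (x y : vec n) (a b t : R), 0 <= t <= 1 ->
    le_ER (h x) a -> le_ER (h y) b ->
    le_ER (h (vadd (vscale t x) (vscale (1 - t) y))) (t * a + (1 - t) * b).

(* closedness: the epigraph is a closed subset of R^n x R *)
Definition closed n (h : vec n -> ER) : Prop :=
  forall (x : vec n) (a : R),
    (forall eps, 0 < eps -> exists (y : vec n) (b : R),
        nsq (vsub y x) + (b - a) ^ 2 < eps /\ le_ER (h y) b) ->
    le_ER (h x) a.

Definition closed_proper_convex n (h : vec n -> ER) : Prop :=
  closed h /\ proper h /\ convex h.

(* hs is the convex conjugate of h: hs y = sup_z { <y,z> - h z } in (-oo,+oo]. *)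
Definition conj_set n (h : vec n -> ER) (y : vec n) : R -> Prop :=
  fun t => exists (z : vec n) (r : R), h z = Fin r /\ t = inner y z - r.

Definition is_conjugate n (h hs : vec n -> ER) : Prop :=
  forall y : vec n,
    (forall s, hs y = Fin s <-> is_lub (conj_set h y) s) /\
    (hs y = PInf <-> ~ bound (conj_set h y)).

Definition is_prox n (h : vec n -> ER) (gamma : R) (x p : vec n) : Prop :=
  exists hp, h p = Fin hp /\
    forall (z : vec n) (r : R), h z = Fin r ->
      hp + / (2 * gamma) * nsq (vsub p x) <= r + / (2 * gamma) * nsq (vsub z x).

Definition gradQ m n (A : mat m n) (sigma : R) (x : vec n) (u y : vec m) : vec n :=
  vscale (- sigma) (mulTv A (vsub (vsub u (mulv A x)) (vscale (/ sigma) y))).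

(* The x-gradient of the augmented Lagrangian at (x, u, y) is A^T applied to
   y + sigma (A x - u), and after an LADMP step this vector is exactly the
   extrapolation 2 y' - y of CP.  Moreau's decomposition turns the u-update,
   a prox of g with parameter 1/sigma, into the y-update of CP, a prox of g*
   with parameter sigma.  Since proximal points of convex functions are unique
   (the prox objective is strongly convex), the two iterations agree step by
   step, by induction on k. *)
From HB Require Import structures.
From mathcomp Require Import ssreflect ssrfun ssrbool eqtype ssrnat seq fintype bigop.
From Stdlib Require Import Reals Lra Psatz FunctionalExtensionality.
Open Scope R_scope.
Set Implicit Arguments. Unset Strict Implicit.

HB.instance Definition _ :=
  Monoid.isComLaw.Build R 0 Rplus (fun a b c => esym (Rplus_assoc a b c)) Rplus_comm Rplus_0_l.

Lemma big_Rmult_l n a (F : 'I_n -> R) :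
  \big[Rplus/0]_(i < n) (a * F i) = a * \big[Rplus/0]_(i < n) F i.
Proof.
apply: (big_ind2 (fun u v => u = a * v)) => [|u1 v1 u2 v2 -> ->|i _]; ring.
Qed.

Lemma big_Rplus_ge0 n (P : pred 'I_n) (F : 'I_n -> R) :
  (forall i, P i -> 0 <= F i) -> 0 <= \big[Rplus/0]_(i < n | P i) F i.
Proof. by move=> F_ge0; apply: big_ind => //; [lra | move=> a b; lra]. Qed.

Lemma vec_ext n (x y : vec n) : (forall i, x i = y i) -> x = y.
Proof. exact: functional_extensionality. Qed.

Lemma inner_sym n (x y : vec n) : inner x y = inner y x.
Proof. by apply: eq_bigr => i _; ring. Qed.

Lemma inner_addl n (x y z : vec n) : inner (vadd x y) z = inner x z + inner y z.
Proof. by rewrite /inner -big_split /=; apply: eq_bigr => i _; rewrite /vadd; ring. Qed.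

Lemma inner_scalel n a (x z : vec n) : inner (vscale a x) z = a * inner x z.
Proof. by rewrite /inner -big_Rmult_l; apply: eq_bigr => i _; rewrite /vscale; ring. Qed.

Lemma inner_subl n (x y z : vec n) : inner (vsub x y) z = inner x z - inner y z.
Proof.
have -> : vsub x y = vadd x (vscale (-1) y).
  by apply: vec_ext => i; rewrite /vsub /vadd /vscale; ring.
by rewrite inner_addl inner_scalel; ring.
Qed.

Lemma inner_addr n (x y z : vec n) : inner z (vadd x y) = inner z x + inner z y.
Proof. by rewrite inner_sym inner_addl !(inner_sym z). Qed.

Lemma inner_subr n (x y z : vec n) : inner z (vsub x y) = inner z x - inner z y.
Proof. by rewrite inner_sym inner_subl !(inner_sym z). Qed.

Lemma inner_scaler n a (x z : vec n) : inner z (vscale a x) = a * inner z x.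
Proof. by rewrite inner_sym inner_scalel (inner_sym z). Qed.

Ltac expand_inner :=
  rewrite /nsq ?(inner_subl, inner_subr, inner_addl, inner_addr, inner_scalel, inner_scaler).

Lemma nsq_ge0 n (x : vec n) : 0 <= nsq x.
Proof. by apply: big_Rplus_ge0 => i _; nra. Qed.

Lemma nsq_sub_le0 n (x y : vec n) : nsq (vsub x y) <= 0 -> x = y.
Proof.
move=> nsq_le0; apply: vec_ext => i.
move: nsq_le0; rewrite /nsq /inner (bigD1 i) //= {1 2}/vsub.
set rest := \big[_/_]_(_ < _ | _) _ => nsq_le0.
have : 0 <= rest by apply: big_Rplus_ge0 => j _; nra.
nra.
Qed.

Lemma nsq_midpoint n (p q x : vec n) :
  2 * nsq (vsub (vadd (vscale (/2) p) (vscale (1 - /2) q)) x) =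
  nsq (vsub p x) + nsq (vsub q x) - /2 * nsq (vsub p q).
Proof. by expand_inner; rewrite (inner_sym q p) (inner_sym x p) (inner_sym x q); field. Qed.

Lemma nsq_segment n t (w u c : vec n) :
  nsq (vsub (vadd (vscale t w) (vscale (1 - t) u)) c) =
  nsq (vsub u c) + 2 * t * inner (vsub w u) (vsub u c) + t ^ 2 * nsq (vsub w u).
Proof. by expand_inner; rewrite (inner_sym u w) (inner_sym c w) (inner_sym c u); ring. Qed.

Lemma le_of_le_add_linear a b K :
  0 <= K -> (forall t, 0 < t <= 1 -> a <= b + K * t) -> a <= b.
Proof.
move=> K_ge0 H; apply: Rnot_lt_le => b_lt_a.
pose t := Rmin 1 ((a - b) / (2 * (K + 1))).
have t_le1 : t <= 1 by apply: Rmin_l.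
have t_gt0 : 0 < t.
  by apply: Rmin_glb_lt; [lra | apply: Rdiv_lt_0_compat; lra].
have Kt_small : t * (2 * (K + 1)) <= a - b.
  have := Rmult_le_compat_r (2 * (K + 1)) _ _ ltac:(lra) (Rmin_r 1 ((a - b) / (2 * (K + 1)))).
  by rewrite /Rdiv Rmult_assoc Rinv_l; [rewrite Rmult_1_r | lra].
have := H t (conj t_gt0 t_le1); nra.
Qed.

(* Comparing both proximal points with their midpoint: the quadratic term
   contributes the strictly convex defect nsq (p - q) / 4. *)
Lemma prox_unique n (h : vec n -> ER) gam x p q :
  convex h -> 0 < gam -> is_prox h gam x p -> is_prox h gam x q -> p = q.
Proof.
move=> h_convex gam_gt0 [hp [hpE p_min]] [hq [hqE q_min]].
have := h_convex p q hp hq (/2) ltac:(lra) ltac:(rewrite hpE /=; lra) ltac:(rewrite hqE /=; lra).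
case mid: (h _) => [r|] //= r_le.
have := p_min _ r mid; have := q_min _ r mid.
have := nsq_midpoint p q x; have := nsq_ge0 (vsub p q).
have : 0 < / (2 * gam) by apply: Rinv_0_lt_compat; lra.
by move=> *; apply: nsq_sub_le0; nra.
Qed.

Lemma conjugate_convex n (g gs : vec n -> ER) : is_conjugate g gs -> convex gs.
Proof.
move=> gs_conj y1 y2 a b t t01.
case E1: (gs y1) => [s1|] //= s1_le; case E2: (gs y2) => [s2|] //= s2_le.
have [ub1 _] := proj1 (proj1 (gs_conj y1) s1) E1.
have [ub2 _] := proj1 (proj1 (gs_conj y2) s2) E2.
set ym := vadd _ _.
have ub : is_upper_bound (conj_set g ym) (t * s1 + (1 - t) * s2).
  move=> _ [z [r [gz ->]]]; rewrite /ym inner_addl !inner_scalel.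
  have := ub1 _ (ex_intro _ z (ex_intro _ r (conj gz erefl))).
  have := ub2 _ (ex_intro _ z (ex_intro _ r (conj gz erefl))).
  nra.
case Em: (gs ym) => [s|] /=.
  by have [_ least] := proj1 (proj1 (gs_conj ym) s) Em; have := least _ ub; nra.
by apply: (proj1 (proj2 (gs_conj ym)) Em); exists (t * s1 + (1 - t) * s2).
Qed.

(* Test the prox inequality at the points of the segment from u to w and let
   the step size go to 0. *)
Lemma prox_subgradient n (g : vec n -> ER) s c u :
  convex g -> 0 < s -> is_prox g (/ s) c u ->
  exists gu, g u = Fin gu /\
    forall w rw, g w = Fin rw -> gu + inner (vscale s (vsub c u)) (vsub w u) <= rw.
Proof.
move=> g_convex s_gt0 [gu [guE u_min]]; exists gu; split => // w rw gw.
rewrite (_ : / (2 * / s) = s / 2) in u_min; last by field; lra.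
have -> : inner (vscale s (vsub c u)) (vsub w u) = - s * inner (vsub w u) (vsub u c).
  by expand_inner; rewrite (inner_sym u w) (inner_sym c w) (inner_sym c u); ring.
apply: (@le_of_le_add_linear _ _ (s / 2 * nsq (vsub w u))).
  by have := nsq_ge0 (vsub w u); nra.
move=> t t01.
have := g_convex w u rw gu t ltac:(lra) ltac:(rewrite gw /=; lra) ltac:(rewrite guE /=; lra).
case E: (g _) => [r|] //= r_le.
have := u_min _ r E; rewrite nsq_segment.
set I := inner _ _; set N := nsq (vsub w u) => seg.
have : t * gu <= t * (rw + s * I + s / 2 * N * t) by nra.
by move/(Rmult_le_reg_l t _ _ (proj1 t01)); lra.
Qed.

(* The subgradient inequality gives Fenchel's equality g*(y) = <y, u> - g(u) for
   y = v - s u; the prox objective of g* at any z then exceeds its value at y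
   by the Fenchel-Young gap plus nsq (z - y) / (2 s). *)
Lemma moreau_prox n (g gs : vec n -> ER) s v u :
  convex g -> 0 < s -> is_conjugate g gs ->
  is_prox g (/ s) (vscale (/ s) v) u -> is_prox gs s v (vsub v (vscale s u)).
Proof.
move=> g_convex s_gt0 gs_conj u_prox.
have [gu [guE subgrad]] := prox_subgradient g_convex s_gt0 u_prox.
set y := vsub v (vscale s u).
rewrite (_ : vscale s _ = y) in subgrad; last first.
  by apply: vec_ext => i; rewrite /y /vscale /vsub; field; lra.
have lub : is_lub (conj_set g y) (inner y u - gu).
  split; last by move=> b ub; apply: ub; exists u, gu.
  by move=> _ [z [r [gz ->]]]; have := subgrad z r gz; rewrite inner_subr; lra.
have gsyE : gs y = Fin (inner y u - gu).
  case E: (gs y) => [s'|]; last first.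
    by case: (proj1 (proj2 (gs_conj y)) E); exists (inner y u - gu); case: lub.
  have [ub' least'] := proj1 (proj1 (gs_conj y) s') E.
  by rewrite (Rle_antisym _ _ (least' _ (proj1 lub)) (proj2 lub _ ub')).
exists (inner y u - gu); split => // z r gsz.
have [fenchel _] := proj1 (proj1 (gs_conj z) r) gsz.
have := fenchel _ (ex_intro _ u (ex_intro _ gu (conj guE erefl))).
have -> : r + / (2 * s) * nsq (vsub z v) =
    (inner y u - gu + / (2 * s) * nsq (vsub y v))
    + (r - (inner z u - gu)) + / (2 * s) * nsq (vsub z y).
  rewrite /y; expand_inner.
  by rewrite (inner_sym u v) (inner_sym v z) (inner_sym u z); field; lra.
have := nsq_ge0 (vsub z y); have : 0 < / (2 * s) by apply: Rinv_0_lt_compat; lra.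
nra.
Qed.

Definition ladmp_ybar m n (A : mat m n) sigma (x : vec n) (u y : vec m) : vec m :=
  vadd y (vscale sigma (vsub (mulv A x) u)).

Lemma ladmp_ybar_feasible m n (A : mat m n) sigma x y :
  ladmp_ybar A sigma x (mulv A x) y = y.
Proof. by apply: vec_ext => i; rewrite /ladmp_ybar /vadd /vscale /vsub; ring. Qed.

Lemma gradQ_ladmp_ybar m n (A : mat m n) sigma x u y :
  sigma <> 0 -> gradQ A sigma x u y = mulTv A (ladmp_ybar A sigma x u y).
Proof.
move=> sigma_neq0; apply: vec_ext => j.
rewrite /gradQ /mulTv /vscale -big_Rmult_l; apply: eq_bigr => i _.
by rewrite /ladmp_ybar /vadd /vscale /vsub; field.
Qed.

Lemma ladmp_ybar_extrapolation m n (A : mat m n) sigma x' u' y :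
  let y' := vsub y (vscale sigma (vsub u' (mulv A x'))) in
  vsub (vscale 2 y') y = ladmp_ybar A sigma x' u' y'.
Proof. by apply: vec_ext => i; rewrite /ladmp_ybar /vadd /vscale /vsub; ring. Qed.

Lemma ladmp_dual_step m (g gs : vec m -> ER) sigma (y z u : vec m) :
  convex g -> 0 < sigma -> is_conjugate g gs ->
  is_prox g (/ sigma) (vadd (vscale (/ sigma) y) z) u ->
  is_prox gs sigma (vadd y (vscale sigma z)) (vsub y (vscale sigma (vsub u z))).
Proof.
move=> g_convex sigma_gt0 gs_conj.
rewrite (_ : vsub y _ = vsub (vadd y (vscale sigma z)) (vscale sigma u)); last first.
  by apply: vec_ext => i; rewrite /vadd /vscale /vsub; ring.
have -> : vadd (vscale (/ sigma) y) z = vscale (/ sigma) (vadd y (vscale sigma z)).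
  by apply: vec_ext => i; rewrite /vadd /vscale; field; lra.
exact: moreau_prox.
Qed.

Lemma cp_ladmp_step n m (f : vec n -> ER) (g gs : vec m -> ER) (A : mat m n) tau sigma
    (x : vec n) (u y : vec m) (xc' : vec n) (yc' ybc' : vec m) (xl' : vec n) (ul' yl' : vec m) :
  convex f -> convex g -> is_conjugate g gs -> 0 < tau -> 0 < sigma ->
  is_prox f tau (vsub x (vscale tau (mulTv A (ladmp_ybar A sigma x u y)))) xc' ->
  is_prox gs sigma (vadd y (vscale sigma (mulv A xc'))) yc' ->
  ybc' = vsub (vscale 2 yc') y ->
  is_prox f tau (vsub x (vscale tau (gradQ A sigma x u y))) xl' ->
  is_prox g (/ sigma) (vadd (vscale (/ sigma) y) (mulv A xl')) ul' ->
  yl' = vsub y (vscale sigma (vsub ul' (mulv A xl'))) ->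
  [/\ xc' = xl', yc' = yl' & ybc' = ladmp_ybar A sigma xl' ul' yl'].
Proof.
move=> f_convex g_convex gs_conj tau_gt0 sigma_gt0 xc_prox yc_prox -> xl_prox ul_prox ->.
rewrite gradQ_ladmp_ybar in xl_prox; last lra.
have xE : xc' = xl' := prox_unique f_convex tau_gt0 xc_prox xl_prox.
have yE : yc' = vsub y (vscale sigma (vsub ul' (mulv A xl'))).
  rewrite xE in yc_prox.
  apply: (prox_unique (conjugate_convex gs_conj) sigma_gt0 yc_prox).
  exact: ladmp_dual_step g_convex sigma_gt0 gs_conj ul_prox.
by rewrite yE ladmp_ybar_extrapolation.
Qed.

Theorem theorem2p3
  (n m : nat) (f : vec n -> ER) (g : vec m -> ER) (A : mat m n)
  (tau sigma : R) (x0 : vec n) (u0 y0 : vec m) :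
  closed_proper_convex f -> closed_proper_convex g ->
  0 < tau -> 0 < sigma -> u0 = mulv A x0 ->
  forall gs : vec m -> ER, is_conjugate g gs ->
  (* Algorithm CP-x y ybar *)
  forall (xc : nat -> vec n) (yc ybc : nat -> vec m),
  xc 0%nat = x0 -> yc 0%nat = y0 -> ybc 0%nat = y0 ->
  (forall k : nat,
     is_prox f tau (vsub (xc k) (vscale tau (mulTv A (ybc k)))) (xc (S k)) /\
     is_prox gs sigma (vadd (yc k) (vscale sigma (mulv A (xc (S k))))) (yc (S k)) /\
     ybc (S k) = vsub (vscale 2 (yc (S k))) (yc k)) ->
  (* Algorithm LADMP-x u y *)
  forall (xl : nat -> vec n) (ul yl : nat -> vec m),
  xl 0%nat = x0 -> ul 0%nat = u0 -> yl 0%nat = y0 ->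
  (forall k : nat,
     is_prox f tau (vsub (xl k) (vscale tau (gradQ A sigma (xl k) (ul k) (yl k)))) (xl (S k)) /\
     is_prox g (/ sigma) (vadd (vscale (/ sigma) (yl k)) (mulv A (xl (S k)))) (ul (S k)) /\
     yl (S k) = vsub (yl k) (vscale sigma (vsub (ul (S k)) (mulv A (xl (S k)))))) ->
  forall k : nat, (1 <= k)%nat -> xc k = xl k /\ yc k = yl k.
Proof.
move=> [_ [_ f_convex]] [_ [_ g_convex]] tau_gt0 sigma_gt0 u0E gs gs_conj
  xc yc ybc xc0 yc0 ybc0 cp_step xl ul yl xl0 ul0 yl0 ladmp_step.
suff agree k : [/\ xc k = xl k, yc k = yl k & ybc k = ladmp_ybar A sigma (xl k) (ul k) (yl k)].
  by move=> k _; case: (agree k).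
elim: k => [|k [xE yE ybE]].
  by rewrite xc0 yc0 ybc0 xl0 yl0 ul0 u0E ladmp_ybar_feasible.
have [xc_prox [yc_prox ybcE]] := cp_step k.
have [xl_prox [ul_prox ylE]] := ladmp_step k.
rewrite xE yE ybE in xc_prox yc_prox ybcE.
exact: cp_ladmp_step f_convex g_convex gs_conj tau_gt0 sigma_gt0
  xc_prox yc_prox ybcE xl_prox ul_prox ylE.
Qed.
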